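(* Let $\mathcal{A}$ be a separating union-closed family with base set $[n]$ and height $h=4$, and let $\mathcal{B}=\{B_1,B_2,B_3,B_4\}$ be a choice of $\mathcal{B}(\mathcal{A})$ with $|\mathcal{B}|=4$. Then: (i) if $n$ is even, then $\sum_{i=1}^4 |B_i| = 2n-4$ and $|B_i|=\frac{n-2}{2}$ for all $i \in \{1,2,3,4\}$; (ii) if $n$ is odd, then $2n-4 \leq \sum_{i=1}^4 |B_i| \leq 2n-2$ and $|B_i| \geq \frac{n-5}{2}$ for all $i \in \{1,2,3,4\}$; moreover, if there exists $i \in \{1,2,3,4\}$ with $|B_i|=\frac{n-5}{2}$, then $|B_j|=\frac{n-1}{2}$ for all $j \in \{1,2,3,4\} \setminus \{i\}$.
   Context: A family of sets $\mathcal{A}$ is union-closed if it is a finite family of distinct finite sets with at least one nonempty member set, and $X,Y\in\mathcal{A}$ implies $X\cup Y\in\mathcal{A}$ (the empty set may be a member). For a family $\mathcal{F}$, $b(\mathcal{F})=\bigcup_{F\in\mathcal{F}}F$; the base set $b(\mathcal{A})$ is denoted $[n]=\{1,\dots,n\}$. $\mathcal{A}$ is separating if for any two distinct $x,y\in[n]$ there is $A\in\mathcal{A}$ containing exactly one of $x,y$. A chain in $\mathcal{A}$ is a subfamily any two distinct members of which are comparable under proper inclusion; the height $h$ of $\mathcal{A}$ is the maximum size of a chain in $\mathcal{A}$. For real $x\ge 0$, $\mathcal{A}_{<x}=\{A\in\mathcal{A} : |A|<x\}$. For $\mathcal{S}\subseteq\mathcal{A}$ and $S\in\mathcal{S}$,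 $\mathrm{irr}_{\mathcal{S}}(S)=\{s\in S : s\notin b(\mathcal{S}\setminus\{S\})\}$, and $\mathcal{S}$ is irredundant if $\mathrm{irr}_{\mathcal{S}}(S)\neq\emptyset$ for every $S\in\mathcal{S}$. With $B=b(\mathcal{A}_{<n/2})$, $\mathcal{B}(\mathcal{A})$ denotes any irredundant subfamily of $\mathcal{A}_{<n/2}$ of minimum size such that $b(\mathcal{B}(\mathcal{A}))=B$. *)

(* Families of subsets of the base set [n], modelled as
   {set {set 'I_n}} (elements 0..n-1 stand for 1..n). *)
From mathcomp Require Import all_boot all_order.
Set Implicit Arguments. Unset Strict Implicit. Unset Printing Implicit Defensive.

Section Fam.
Variable n : nat.
Notation fam := {set {set 'I_n}}.

Definition bfam (F : fam) : {set 'I_n} := \bigcup_(X in F) X.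

(* union-closed: finite family of distinct finite sets (automatic), at least
   one nonempty member, closed under pairwise unions *)
Definition union_closed (A : fam) : Prop :=
  (exists2 X, X \in A & X != set0) /\
  (forall X Y, X \in A -> Y \in A -> X :|: Y \in A).

Definition separating (A : fam) : Prop :=
  forall x y : 'I_n, x != y -> exists2 X, X \in A & (x \in X) != (y \in X).

Definition is_chain (C : fam) : Prop :=
  forall X Y, X \in C -> Y \in C -> X != Y -> (X \proper Y) || (Y \proper X).

Definition has_height (A : fam) (h : nat) : Prop :=
  (exists2 C : fam, C \subset A /\ is_chain C & #|C| = h) /\
  (forall C : fam, C \subset A -> is_chain C -> #|C| <= h).

Definition fam_lt_half (A : fam) : fam := [set X in A | 2 * #|X| < n].

Definition irr (S : fam) (X : {set 'I_n}) : {set 'I_n} := X :\: bfam (S :\ X).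

Definition irredundant (S : fam) : Prop := forall X, X \in S -> irr S X != set0.

Definition is_BA (A S : fam) : Prop :=
  [/\ S \subset fam_lt_half A, irredundant S,
      bfam S = bfam (fam_lt_half A) &
      forall S' : fam, S' \subset fam_lt_half A -> irredundant S' ->
        bfam S' = bfam (fam_lt_half A) -> #|S| <= #|S'| ].
End Fam.

(* An irredundant subfamily S of a union-closed family A yields a chain of
   #|S| members of A: b(S) is in A and properly contains b(S :\ X) for every
   X in S, so one can peel off members one at a time.  For B = B(A) with
   #|B| = 4 = h this chain is maximal.  Hence b(B) = [n] (otherwise [n] could
   be put on top), and each irr_B(X) is at most a point: two of its points are
   split by some Z in A, and the strict inclusions
   b(B :\ X) < b(B :\ X) :|: Z < [n] would extend the chain of B :\ X to
   length 5.  Every point of [n] then lies in two members of B or in some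
   irr_B(X), so 2n <= sum |B_i| + 4; together with 2|B_i| < n the stated
   bounds are arithmetic. *)

From mathcomp Require Import all_boot all_order zify.
Set Implicit Arguments. Unset Strict Implicit. Unset Printing Implicit Defensive.

Lemma leq_sum_setD_bound (I : finType) (T U : {set I}) (F : I -> nat) d c :
  U \subset T -> (forall X, X \in T -> F X + d <= c) ->
  \sum_(X in T) F X + #|T :\: U| * d <= \sum_(X in U) F X + #|T :\: U| * c.
Proof.
move=> sUT Fc; rewrite (big_setID U) /= (setIidPr sUT) -addnA leq_add2l.
rewrite -!sum_nat_const -big_split; apply: leq_sum => X /setDP[XT _]; exact: Fc.
Qed.

Section FourTerms.
Variables (I : finType) (T : {set I}) (F : I -> nat) (n : nat).
Hypotheses (cardT : #|T| = 4) (F_lt : forall X, X \in T -> 2 * F X < n)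
  (sum_ge : 2 * n <= \sum_(X in T) F X + 4).

Let double_sum_le (U : {set I}) d : U \subset T ->
  (forall X, X \in T -> 2 * F X + d <= n) ->
  2 * \sum_(X in T) F X + (4 - #|U|) * d <= 2 * \sum_(X in U) F X + (4 - #|U|) * n.
Proof.
by move=> sUT; rewrite -cardT -(cardsDS sUT) !big_distrr; apply: leq_sum_setD_bound.
Qed.

Let double_sum_le_set0 d : (forall X, X \in T -> 2 * F X + d <= n) ->
  2 * \sum_(X in T) F X + 4 * d <= 4 * n.
Proof. by move/(double_sum_le (sub0set T)); rewrite big_set0 cards0. Qed.

Let double_sum_le_set1 X d : X \in T -> (forall X, X \in T -> 2 * F X + d <= n) ->
  2 * \sum_(X in T) F X + 3 * d <= 2 * F X + 3 * n.
Proof. by rewrite -sub1set => /double_sum_le sXT /sXT; rewrite big_set1 cards1. Qed.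

Let double_sum_le_set2 X Y d : X \in T -> Y \in T -> Y != X ->
  (forall X, X \in T -> 2 * F X + d <= n) ->
  2 * \sum_(X in T) F X + 2 * d <= 2 * (F X + F Y) + 2 * n.
Proof.
move=> XT YT YX; have sXYT : [set X; Y] \subset T by rewrite subUset !sub1set XT YT.
move/(double_sum_le sXYT); rewrite big_setU1 ?big_set1 ?cards2 ?inE 1?eq_sym //.
by rewrite YX.
Qed.

Lemma four_terms_even : ~~ odd n ->
  \sum_(X in T) F X + 4 = 2 * n /\ (forall X, X \in T -> 2 * F X + 2 = n).
Proof.
move=> ev; have Fle X : X \in T -> 2 * F X + 2 <= n.
  move/F_lt; have := odd_double_half n; rewrite (negbTE ev) -addnn; lia.
split; first by have := double_sum_le_set0 Fle; lia.
by move=> X XT; have := double_sum_le_set1 XT Fle; have := Fle X XT; lia.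
Qed.

Lemma four_terms_bounds :
  [/\ 2 * n <= \sum_(X in T) F X + 4, \sum_(X in T) F X + 2 <= 2 * n,
      (forall X, X \in T -> n <= 2 * F X + 5) &
      (forall X, X \in T -> 2 * F X + 5 = n ->
         forall Y, Y \in T -> Y != X -> 2 * F Y + 1 = n)].
Proof.
have Fle X : X \in T -> 2 * F X + 1 <= n by rewrite addn1; apply: F_lt.
split=> //; first by have := double_sum_le_set0 Fle; lia.
  by move=> X XT; have := double_sum_le_set1 XT Fle; lia.
move=> X XT FX Y YT YX; have := double_sum_le_set2 XT YT YX Fle; have := Fle Y YT; lia.
Qed.

End FourTerms.

Section Families.
Variables (n : nat) (A : {set {set 'I_n}}).
Implicit Types (S C : {set {set 'I_n}}) (X Y Z W : {set 'I_n}).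

Lemma irredundantD1 S X : irredundant S -> irredundant (S :\ X).
Proof.
move=> irrS Y /setD1P[YX YS]; have [x] := set0Pn _ (irrS Y YS).
move=> /setDP[xY xnS]; apply/set0Pn; exists x; apply/setDP; split=> //.
apply: contra xnS => /bigcupP[Z /setD1P[ZY /setD1P[_ ZS]] xZ].
by apply/bigcupP; exists Z => //; apply/setD1P.
Qed.

Lemma bfamD1_proper S X : irredundant S -> X \in S -> bfam (S :\ X) \proper bfam S.
Proof.
move=> irrS XS; have [x /setDP[xX xnS]] := set0Pn _ (irrS X XS).
apply/properP; split; last by exists x => //; apply/bigcupP; exists X.
by apply/bigcupsP => Y /setD1P[_ YS]; apply: bigcup_sup.
Qed.

Lemma is_chain_setU1 C W : is_chain C -> (forall Y, Y \in C -> Y \proper W) ->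
  is_chain (W |: C) /\ #|W |: C| = #|C|.+1.
Proof.
move=> chC ltW; split.
  move=> X Y /setU1P[-> | XC] /setU1P[-> | YC]; rewrite ?eqxx // => XY.
  - by rewrite ltW ?orbT.
  - by rewrite ltW.
  - exact: chC.
by rewrite cardsU1; case: (boolP (W \in C)) => // /ltW; rewrite properxx.
Qed.

Lemma double_card_le_sum_irr S : bfam S = [set: 'I_n] ->
  2 * n <= \sum_(X in S) #|X| + \sum_(X in S) #|irr S X|.
Proof.
move=> coverS.
have count_mem (f : {set 'I_n} -> {set 'I_n}) :
    \sum_(X in S) #|f X| = \sum_x \sum_(X in S) (x \in f X : nat).
  rewrite exchange_big; apply: eq_bigr => X _.
  by rewrite -sum1_card big_mkcond; apply: eq_bigr => x _; case: (x \in f X).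
rewrite !count_mem -big_split /= -[X in 2 * X]card_ord mulnC -sum_nat_const.
apply: leq_sum => x _; rewrite -big_split /=.
have /bigcupP[X XS xX] : x \in bfam S by rewrite coverS inE.
rewrite (bigD1 X XS) /= xX; case: (x \in irr S X) /idP => [// | xnirr].
have /bigcupP[Y /setD1P[YX YS] xY] : x \in bfam (S :\ X).
  by apply: contraT => xnS; case: xnirr; apply/setDP.
by rewrite (bigD1 Y) /= ?YS ?YX ?xY //; lia.
Qed.

Section UnionClosed.
Hypothesis closedA : forall X Y, X \in A -> Y \in A -> X :|: Y \in A.

Lemma setU_bfam_mem S Z : Z \in A -> S \subset A -> Z :|: bfam S \in A.
Proof.
move=> ZA sSA; rewrite /bfam.
apply: (big_rec (fun W => Z :|: W \in A)) => [|X W XS ZWA]; first by rewrite setU0.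
by rewrite setUCA; apply: closedA (subsetP sSA X XS) ZWA.
Qed.

Lemma bfam_mem S : S \subset A -> S != set0 -> bfam S \in A.
Proof.
move=> sSA /set0Pn[X XS]; have XsubS : X \subset bfam S by apply: bigcup_sup.
by rewrite -(setUidPr XsubS) setU_bfam_mem ?(subsetP sSA).
Qed.

Lemma irredundant_chain S : S \subset A -> irredundant S ->
  exists C, [/\ C \subset A, is_chain C, #|C| = #|S|
            & forall Y, Y \in C -> Y \subset bfam S].
Proof.
move: {2}#|S| (erefl #|S|) => k; elim: k S => [|k IH] S cardS sSA irrS.
  by exists set0; rewrite sub0set cards0; split=> // [X Y|Y]; rewrite inE.
have [X XS] : exists X, X \in S by apply/set0Pn; rewrite -card_gt0 cardS.
have cardSX : #|S :\ X| = k by move: cardS; rewrite (cardsD1 X) XS => -[].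
have [C [sCA chC cardC leC]] :=
  IH _ cardSX (subset_trans (subsetDl _ _) sSA) (irredundantD1 (X := X) irrS).
have ltC Y : Y \in C -> Y \proper bfam S.
  by move/leC/sub_proper_trans; apply; apply: bfamD1_proper.
have [chSC cardSC] := is_chain_setU1 chC ltC.
exists (bfam S |: C); split=> //; first 1 last.
- by rewrite cardSC cardC cardSX cardS.
- by move=> Y /setU1P[-> // | /ltC/proper_sub].
rewrite subUset sCA andbT sub1set bfam_mem //.
by apply/set0Pn; exists X.
Qed.

Variable h : nat.
Hypothesis height_le : forall C, C \subset A -> is_chain C -> #|C| <= h.

Lemma chain_below_lt_height C W : C \subset A -> is_chain C -> W \in A ->
  (forall Y, Y \in C -> Y \proper W) -> #|C| < h.
Proof.
move=> sCA chC WA ltW; have [chWC cardWC] := is_chain_setU1 chC ltW.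
by rewrite -cardWC height_le // subUset sub1set WA.
Qed.

Hypothesis setTA : [set: 'I_n] \in A.

Lemma irredundant_height_cover S : S \subset A -> irredundant S -> #|S| = h ->
  bfam S = [set: 'I_n].
Proof.
move=> sSA irrS cardS; have [C [sCA chC cardC leC]] := irredundant_chain sSA irrS.
apply/eqP; apply: contraT => ltT.
have := chain_below_lt_height sCA chC setTA.
rewrite cardC cardS ltnn; apply=> Y /leC /sub_proper_trans; apply.
by rewrite properT.
Qed.

Lemma irredundant_height_card_irr S X : separating A -> S \subset A ->
  irredundant S -> #|S| = h -> X \in S -> #|irr S X| <= 1.
Proof.
move=> sepA sSA irrS cardS XS; apply/card_le1_eqP => x y xirr yirr.
apply/eqP; apply: contraT => yx; have [Z ZA sepZ] := sepA y x yx.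
set W := bfam (S :\ X).
have [u [v [uZ vZ uW vW]]] :
    exists u v, [/\ u \in Z, v \notin Z, u \notin W & v \notin W].
  have [xW yW] : x \notin W /\ y \notin W by move: xirr yirr => /setDP[_ ?] /setDP[_ ?].
  move: sepZ; case yZ: (y \in Z); case xZ: (x \in Z) => // _;
    [exists y, x | exists x, y]; by rewrite xZ yZ.
have sSXA : S :\ X \subset A by apply: subset_trans (subsetDl _ _) sSA.
have [C [sCA chC cardC leC]] := irredundant_chain sSXA (irredundantD1 (X := X) irrS).
have WZA : W :|: Z \in A by rewrite setUC setU_bfam_mem.
have ltWZ Y : Y \in C -> Y \proper W :|: Z.
  move/leC/sub_proper_trans; apply; apply/properP; split; first exact: subsetUl.
  by exists u; rewrite ?inE ?uZ ?orbT.
have ltWZT : W :|: Z \proper [set: 'I_n].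
  rewrite properT; apply/eqP => eWZ; move: (in_setT v).
  by rewrite -eWZ inE (negbTE vW) (negbTE vZ).
have [chWZC cardWZC] := is_chain_setU1 chC ltWZ.
have := chain_below_lt_height _ chWZC setTA.
rewrite cardWZC cardC -cardS (cardsD1 X S) XS ltnn subUset sub1set WZA sCA; apply=> //.
by move=> Y /setU1P[-> // | /ltWZ /proper_trans]; apply.
Qed.

End UnionClosed.

End Families.

Theorem propositionL (n : nat) (A Bf : {set {set 'I_n}}) :
  union_closed A -> bfam A = [set: 'I_n] -> separating A ->
  has_height A 4 -> is_BA A Bf -> #|Bf| = 4 ->
  (~~ odd n ->
     (\sum_(X in Bf) #|X|) + 4 = 2 * n /\
     (forall X, X \in Bf -> 2 * #|X| + 2 = n)) /\
  (odd n ->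
     [/\ 2 * n <= (\sum_(X in Bf) #|X|) + 4,
         (\sum_(X in Bf) #|X|) + 2 <= 2 * n,
         (forall X, X \in Bf -> n <= 2 * #|X| + 5) &
         (forall X, X \in Bf -> 2 * #|X| + 5 = n ->
            forall Y, Y \in Bf -> Y != X -> 2 * #|Y| + 1 = n)]).
Proof.
move=> [[X0 X0A _] closedA] coverA sepA [_ height_le] [sB_half irrB _ _] cardB.
have B_half X : X \in Bf -> 2 * #|X| < n by move/(subsetP sB_half); rewrite inE => /andP[].
have sBA : Bf \subset A.
  by apply: subset_trans sB_half _; apply/subsetP => X; rewrite inE => /andP[].
have setTA : [set: 'I_n] \in A.
  by rewrite -coverA bfam_mem //; apply/set0Pn; exists X0.
have coverB := irredundant_height_cover closedA height_le setTA sBA irrB cardB.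
have sum_ge : 2 * n <= \sum_(X in Bf) #|X| + 4.
  apply: leq_trans (double_card_le_sum_irr coverB) _; rewrite leq_add2l.
  rewrite -cardB -sum1_card; apply: leq_sum => X XB.
  exact: (irredundant_height_card_irr closedA height_le setTA sepA sBA irrB
           cardB XB).
by split=> [even_n | _]; [apply: four_terms_even | apply: four_terms_bounds].
Qed.
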